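(* Let $p_0$ be the standard Gaussian density on $\mathbb{R}^d$ with probability measure $P_0$, let $g_\theta: \mathbb{R}^d \to \mathbb{R}^d$ be measurable, let $r: \mathbb{R}^d \to \mathbb{R}$ be measurable, and let $\alpha > 0$ with $\mathbb{E}_{{\mathbf{x}}_0 \sim p_0}[e^{r(g_\theta({\mathbf{x}}_0))/\alpha}] < \infty$. Let $p^{\mathrm{base}}$ be the density of the pushforward measure $(g_\theta)_\sharp P_0$, and let $$p^\star({\mathbf{x}}) = \frac{1}{Z^\star} p^{\mathrm{base}}({\mathbf{x}}) \exp\!\left(\frac{r({\mathbf{x}})}{\alpha}\right), \qquad Z^\star = \int_{\mathbb{R}^d} p^{\mathrm{base}}({\mathbf{x}}) \exp\!\left(\frac{r({\mathbf{x}})}{\alpha}\right) d{\mathbf{x}} = \int_{\mathbb{R}^d} p_0({\mathbf{x}}_0)\exp\!\left(\frac{r(g_\theta({\mathbf{x}}_0))}{\alpha}\right) d{\mathbf{x}}_0.$$ Define the tilted noise density $$p_0^\star({\mathbf{x}}_0) = \frac{1}{Z^\star} p_0({\mathbf{x}}_0) \exp\!\left(\frac{r(g_\theta({\mathbf{x}}_0))}{\alpha}\right)$$ with corresponding probability measure $P_0^\star$. Then: (1) the pushforward measure $(g_\theta)_\sharp P_0^\star$ has density $p^\star$; (2) $p_0^\star$ is the unique minimizer of $D_{\mathrm{KL}}(q_0 \| p_0)$ over all noise densities $q_0$ on $\mathbb{R}^d$ such that the pushforward $(g_\theta)_\sharp Q_0$ of the corresponding probability measure $Q_0$ has density $p^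\star$.
   Context: For a measurable map $g$ and measure $P$, $(g)_\sharp P(A) = P(g^{-1}(A))$ for Borel sets $A$. $D_{\mathrm{KL}}(q\|p) = \int q \log(q/p)$ is the Kullback–Leibler divergence. It is assumed that $(g_\theta)_\sharp P_0$ admits a density $p^{\mathrm{base}}$ with respect to Lebesgue measure.
   Formalization: Uniqueness of the minimizer in part (2) holds only when $D_{\mathrm{KL}}(p_0^\star \| p_0)$ is finite, while the minimality of $p_0^\star$ is asserted without that condition. Apart from conventions, each condition added here is assumed in the paper as well or is needed for the statement above to hold. *)

From HB Require Import structures.
From mathcomp Require Import all_boot all_order all_algebra.
From mathcomp Require Import all_classical all_reals all_analysis.
Set Implicit Arguments. Unset Strict Implicit. Unset Printing Implicit Defensive.
Import Order.TTheory GRing.Theory Num.Theory.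
Import numFieldNormedType.Exports.
Local Open Scope classical_set_scope.
Local Open Scope ring_scope.

(* R^d is modelled as d.-tuple R, with the library's product (= Borel)
   sigma-algebra generated by the coordinate projections. *)

(* [lam] is Lebesgue measure on R^d: it gives every closed box its volume.
   This property determines the measure uniquely on the Borel sets. *)
Definition is_lebesgue_measure (R : realType) (d : nat)
  (lam : {measure set (d.-tuple R) -> \bar R}) : Prop :=
  forall a b : 'I_d -> R, (forall i, a i <= b i) ->
    lam [set x | forall i, a i <= tnth x i <= b i] =
    (\prod_(i < d) (b i - a i))%:E.

Definition std_gauss (R : realType) (d : nat) (x : d.-tuple R) : R :=
  (Num.sqrt (2 * pi) ^+ d)^-1 * expR (- (\sum_(i < d) tnth x i ^+ 2) / 2).

Definition is_density (R : realType) (d : nat)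
  (lam : {measure set (d.-tuple R) -> \bar R}) (q : d.-tuple R -> R) : Prop :=
  [/\ measurable_fun setT q, (forall x, 0 <= q x) &
      (\int[lam]_x (q x)%:E = 1)%E].

Definition pushforward_has_density (R : realType) (d : nat)
  (lam : {measure set (d.-tuple R) -> \bar R}) (g : d.-tuple R -> d.-tuple R)
  (q p : d.-tuple R -> R) : Prop :=
  forall A : set (d.-tuple R), measurable A ->
    (\int[lam]_(x in g @^-1` A) (q x)%:E = \int[lam]_(x in A) (p x)%:E)%E.

(* pointwise integrand of KL divergence, with the usual conventions
   0 log(0/b) = 0 and a log(a/0) = +oo for a > 0 *)
Definition kl_integrand (R : realType) (a b : R) : \bar R :=
  if a == 0 then 0%E else if b <= 0 then +oo%E else (a * ln (a / b))%:E.

Definition KL (R : realType) (d : nat)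
  (lam : {measure set (d.-tuple R) -> \bar R}) (q p : d.-tuple R -> R) : \bar R :=
  (\int[lam]_x kl_integrand (q x) (p x))%E.

From HB Require Import structures.
From mathcomp Require Import all_boot all_order all_algebra.
From mathcomp Require Import all_classical all_reals all_analysis.
From mathcomp Require Import measurable_realfun lra.
Set Implicit Arguments. Unset Strict Implicit. Unset Printing Implicit Defensive.
Import Order.TTheory GRing.Theory Num.Theory.
Import numFieldNormedType.Exports.
Local Open Scope classical_set_scope.
Local Open Scope ring_scope.

(* Change of variables along [g] (for simple functions, then by monotone
   convergence) turns "the pushforward of [q0] by [g] has density [pstar]" into
   [\int q0 (f \o g) = \int pstar f] for every measurable [f >= 0].  Since
   [p0star = p0 * exp (k \o g)] with [k = r / alpha - ln Zstar], this gives (1).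
   For (2), the three-point identity
     a ln (a/b) - a + b = (a ln (a/p) - a + p) + a ln (p/b) - p + b
   with [p = p0star], [b = p0] yields
     KL (q0 || p0) = \int gen_kl q0 p0star + KL (p0star || p0)
   for every admissible [q0], because [\int q0 (k \o g)] only depends on the
   pushforward of [q0].  The first term is nonnegative and vanishes only when
   [q0 = p0star] a.e.  The signed [k] is split into positive and negative parts;
   the negative part is integrable because [p0star * k^- <= p0]. *)

Section gen_kl.
Variable R : realType.
Implicit Types a b c t u : R.

(* Integrand of the generalised (Csiszar I-) divergence: unlike [a * ln (a / b)]
   it is nonnegative, and it has the same integral when [a] and [b] are
   probability densities. *)
Definition gen_kl a b := a * ln (a / b) - a + b.

Lemma expR_mulr_subr1_gt0 u : u != 0 -> 0 < expR u * (u - 1) + 1.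
Proof.
move=> u0; have /expR_gt1Dx : - u != 0 by rewrite oppr_eq0.
rewrite -subr_gt0 => /(mulr_gt0 (expR_gt0 u)).
by rewrite mulrBr -expRD subrr expR0; lra.
Qed.

Lemma expR_mulr_subr1_ge0 u : 0 <= expR u * (u - 1) + 1.
Proof.
have [->|/expR_mulr_subr1_gt0/ltW//] := eqVneq u 0.
by rewrite expR0; lra.
Qed.

Lemma expR_mulr_negpart_le1 t : expR t * Num.max (- t) 0 <= 1.
Proof.
have := expR_mulr_subr1_ge0 t; rewrite mulrBr mulr1.
have [t0|t0] := leP 0 t; first by rewrite max_r ?oppr_le0// mulr0.
rewrite max_l; last by rewrite oppr_ge0 ltW.
by rewrite mulrN; have := expR_gt0 t; lra.
Qed.

Lemma gen_kl0r b : gen_kl 0 b = b.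
Proof. by rewrite /gen_kl !mul0r subr0 add0r. Qed.

Lemma gen_kl_expR a b : 0 < a -> 0 < b ->
  gen_kl a b = b * (expR (ln (a / b)) * (ln (a / b) - 1) + 1).
Proof.
move=> a0 b0; rewrite /gen_kl lnK ?posrE ?divr_gt0//.
by rewrite mulrDr mulrA mulrCA divff ?gt_eqF// !mulr1; lra.
Qed.

Lemma gen_kl_ge0 a b : 0 <= a -> 0 < b -> 0 <= gen_kl a b.
Proof.
rewrite le_eqVlt => /predU1P[<- b0|a0 b0]; first by rewrite gen_kl0r ltW.
by rewrite gen_kl_expR//; apply: mulr_ge0; [exact: ltW|exact: expR_mulr_subr1_ge0].
Qed.

Lemma gen_kl_eq0 a b : 0 <= a -> 0 < b -> gen_kl a b = 0 -> a = b.
Proof.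
rewrite le_eqVlt => /predU1P[<- b0|a0 b0].
  by rewrite gen_kl0r => b_eq0; rewrite b_eq0 ltxx in b0.
have [/eqP u0 _|u0] := eqVneq (ln (a / b)) 0.
  by move: u0; rewrite ln_eq0 ?divr_gt0// => /eqP/divr1_eq.
rewrite gen_kl_expR// => /eqP; rewrite mulf_eq0 gt_eqF//=.
by rewrite gt_eqF// expR_mulr_subr1_gt0.
Qed.

Lemma gen_klxx a : gen_kl a a = 0.
Proof.
have [->|a0] := eqVneq a 0; first by rewrite gen_kl0r.
by rewrite /gen_kl divff// ln1 mulr0 sub0r addNr.
Qed.

Lemma gen_kl_tilt a b t : 0 <= a -> 0 < b ->
  gen_kl a b + b * expR t = gen_kl a (b * expR t) + a * t + b.
Proof.
rewrite le_eqVlt => /predU1P[<- _|a0 b0]; first by rewrite !gen_kl0r mul0r addr0 addrC.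
rewrite /gen_kl; have -> : ln (a / (b * expR t)) = ln (a / b) - t.
  rewrite invfM mulrA lnM ?posrE ?divr_gt0 ?invr_gt0 ?expR_gt0//.
  by rewrite lnV ?posrE ?expR_gt0// expRK.
lra.
Qed.

Lemma xlnx_divE a c : 0 <= a -> 0 < c -> a * ln (a / c) = a * (ln a - ln c).
Proof.
rewrite le_eqVlt => /predU1P[<-|a0 c0]; first by rewrite !mul0r.
by rewrite lnM ?posrE ?invr_gt0// lnV ?posrE.
Qed.

End gen_kl.

Section integral_gen_kl.
Context d (T : measurableType d) (R : realType) (mu : {measure set T -> \bar R}).
Implicit Types f p q b k : T -> R.

Lemma ge0_integral_eq0_ae f : (forall x, 0 <= f x) -> measurable_fun setT f ->
  (\int[mu]_x (f x)%:E = 0)%E -> {ae mu, forall x, f x = 0}.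
Proof.
move=> f0 mf int0.
have : (\int[mu]_x `|(f x)%:E| = 0)%E.
  by rewrite -int0; apply: eq_integral => x _; rewrite gee0_abs// lee_fin.
move/(ae_eq_integral_abs mu measurableT ((measurable_EFinP _ _).2 mf)).
by apply: filterS => x /(_ I) [].
Qed.

Lemma integral_mulr_indic f (A : set T) :
  (\int[mu]_x (f x * \1_A x)%:E = \int[mu]_(x in A) (f x)%:E)%E.
Proof.
rewrite [RHS]integral_mkcond; apply: eq_integral => x _.
by rewrite /patch indicE; case: ifP; rewrite ?mulr1 ?mulr0.
Qed.

Lemma ge0_integralD_EFin (f1 f2 : T -> R) :
  (forall x, 0 <= f1 x) -> (forall x, 0 <= f2 x) ->
  measurable_fun setT f1 -> measurable_fun setT f2 ->
  (\int[mu]_x (f1 x + f2 x)%:E = \int[mu]_x (f1 x)%:E + \int[mu]_x (f2 x)%:E)%E.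
Proof.
move=> f10 f20 mf1 mf2; under eq_integral do rewrite EFinD.
apply: ge0_integralD => //; by [move=> x _; rewrite lee_fin | exact/measurable_EFinP].
Qed.

Lemma integralB_ge0_fin (f1 f2 : T -> R) :
  (forall x, 0 <= f1 x) -> (forall x, 0 <= f2 x) ->
  measurable_fun setT f1 -> measurable_fun setT f2 ->
  (\int[mu]_x (f2 x)%:E < +oo)%E ->
  (\int[mu]_x (f1 x - f2 x)%:E = \int[mu]_x (f1 x)%:E - \int[mu]_x (f2 x)%:E)%E.
Proof.
move=> f10 f20 mf1 mf2 f2_lt; set f := fun x => f1 x - f2 x.
have mf : measurable_fun setT f by exact: measurable_funB.
have f2_fin : (\int[mu]_x (f2 x)%:E)%E \is a fin_num.
  by rewrite ge0_fin_numE// integral_ge0// => x _; rewrite lee_fin.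
have neg_fin : (\int[mu]_x (funrneg f x)%:E)%E \is a fin_num.
  rewrite ge0_fin_numE ?integral_ge0//; last by move=> x _; rewrite lee_fin.
  apply: le_lt_trans f2_lt; apply: ge0_le_integral => //.
  - by move=> x _; rewrite lee_fin.
  - exact/measurable_EFinP/measurable_funrneg.
  - exact/measurable_EFinP.
  move=> x _; rewrite lee_fin ge_max f20 andbT /f.
  by have := f10 x; lra.
have posneg : (\int[mu]_x (funrpos f x)%:E + \int[mu]_x (f2 x)%:E =
               \int[mu]_x (f1 x)%:E + \int[mu]_x (funrneg f x)%:E)%E.
  rewrite -!ge0_integralD_EFin//; try exact: funrpos_ge0; try exact: funrneg_ge0.
  - apply: eq_integral => x _; congr EFin.
    by have := congr1 (fun h => h x) (funrposBneg f); rewrite !fctE /f; lra.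
  - exact: measurable_funrneg.
  - exact: measurable_funrpos.
rewrite integralE funerpos funerneg -[X in (X - _)%E](addeK _ f2_fin) posneg.
by rewrite addeAC addeK.
Qed.

Lemma measurable_xlnx_div q b : (forall x, 0 <= q x) -> (forall x, 0 < b x) ->
  measurable_fun setT q -> measurable_fun setT b ->
  measurable_fun setT (fun x => q x * ln (q x / b x)).
Proof.
move=> q_ge0 b_gt0 mq mb; rewrite (_ : (fun x => _) = fun x => q x * (ln (q x) - ln (b x))).
  apply: measurable_funM => //.
  by apply: measurable_funB; apply: measurableT_comp (@measurable_ln R) _.
by apply/funext => x; rewrite xlnx_divE.
Qed.

Lemma measurable_gen_kl q b : (forall x, 0 <= q x) -> (forall x, 0 < b x) ->
  measurable_fun setT q -> measurable_fun setT b ->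
  measurable_fun setT (fun x => gen_kl (q x) (b x)).
Proof.
move=> q_ge0 b_gt0 mq mb; apply: measurable_funD => //.
by apply: measurable_funB => //; exact: measurable_xlnx_div.
Qed.

Lemma integral_xlnx_gen_kl q b : (forall x, 0 <= q x) -> (forall x, 0 < b x) ->
  measurable_fun setT q -> measurable_fun setT b ->
  (\int[mu]_x (q x)%:E = 1)%E -> (\int[mu]_x (b x)%:E = 1)%E ->
  (\int[mu]_x (q x * ln (q x / b x))%:E = \int[mu]_x (gen_kl (q x) (b x))%:E)%E.
Proof.
move=> q_ge0 b_gt0 mq mb iq ib.
have kl0 x : 0 <= gen_kl (q x) (b x) by exact: gen_kl_ge0.
transitivity (\int[mu]_x (gen_kl (q x) (b x) + q x - b x)%:E)%E.
  by apply: eq_integral => x _; rewrite /gen_kl; congr EFin; lra.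
have mkl := measurable_gen_kl q_ge0 b_gt0 mq mb.
rewrite integralB_ge0_fin.
- by rewrite ge0_integralD_EFin// iq ib addeK.
- by move=> x; exact: addr_ge0.
- by move=> x; exact/ltW.
- exact: measurable_funD.
- exact: mb.
- by rewrite ib ltry.
Qed.

Lemma ae_eq_of_integral_gen_kl_eq0 q p : (forall x, 0 <= q x) -> (forall x, 0 < p x) ->
  measurable_fun setT q -> measurable_fun setT p ->
  (\int[mu]_x (gen_kl (q x) (p x))%:E = 0)%E -> {ae mu, forall x, q x = p x}.
Proof.
move=> q_ge0 p_gt0 mq mp /ge0_integral_eq0_ae.
have kl0 x : 0 <= gen_kl (q x) (p x) by exact: gen_kl_ge0.
move=> /(_ kl0 (measurable_gen_kl q_ge0 p_gt0 mq mp)).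
by apply: filterS => x; exact: gen_kl_eq0.
Qed.

Section tilt.
Variables b k : T -> R.
Hypothesis b_gt0 : forall x, 0 < b x.
Hypotheses (mb : measurable_fun setT b) (mk : measurable_fun setT k).
Hypothesis intb : (\int[mu]_x (b x)%:E = 1)%E.
Let p x := b x * expR (k x).
Hypothesis intp : (\int[mu]_x (p x)%:E = 1)%E.

Let p_gt0 x : 0 < p x. Proof. by rewrite mulr_gt0 ?expR_gt0. Qed.

Let p_ge0 x : 0 <= p x. Proof. exact: ltW. Qed.

Let mp : measurable_fun setT p.
Proof. exact: measurable_funM mb (measurableT_comp (@measurable_expR R) mk). Qed.

Lemma integral_tilt_negpart_le1 :
  (\int[mu]_x (p x * funrneg k x)%:E <= 1)%E.
Proof.
rewrite -intb; apply: ge0_le_integral => //.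
- by move=> x _; rewrite lee_fin mulr_ge0 ?funrneg_ge0 ?p_ge0.
- by apply/measurable_EFinP; apply: measurable_funM => //; exact: measurable_funrneg.
- exact/measurable_EFinP.
move=> x _; rewrite lee_fin /p -mulrA -[leRHS]mulr1 ler_wpM2l ?(ltW (b_gt0 x))//.
exact: expR_mulr_negpart_le1.
Qed.

Lemma integral_gen_kl_tiltE q : (forall x, 0 <= q x) -> measurable_fun setT q ->
  (\int[mu]_x (q x * funrneg k x)%:E < +oo)%E ->
  (\int[mu]_x (gen_kl (q x) (b x))%:E =
   \int[mu]_x (gen_kl (q x) (p x))%:E
     + (\int[mu]_x (q x * funrpos k x)%:E + \int[mu]_x (b x)%:E)
     - (\int[mu]_x (q x * funrneg k x)%:E + \int[mu]_x (p x)%:E))%E.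
Proof.
move=> q_ge0 mq negfin.
have qpos x : 0 <= q x * funrpos k x by rewrite mulr_ge0 ?funrpos_ge0.
have qneg x : 0 <= q x * funrneg k x by rewrite mulr_ge0 ?funrneg_ge0.
have mqpos : measurable_fun setT (fun x => q x * funrpos k x).
  by apply: measurable_funM => //; exact: measurable_funrpos.
have mqneg : measurable_fun setT (fun x => q x * funrneg k x).
  by apply: measurable_funM => //; exact: measurable_funrneg.
have kl0 x : 0 <= gen_kl (q x) (p x) by exact: gen_kl_ge0.
have mkl := measurable_gen_kl q_ge0 p_gt0 mq mp.
transitivity (\int[mu]_x ((gen_kl (q x) (p x) + (q x * funrpos k x + b x))
                          - (q x * funrneg k x + p x))%:E)%E.
  apply: eq_integral => x _; congr EFin.
  have := gen_kl_tilt (k x) (q_ge0 x) (b_gt0 x).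
  have := congr1 (fun h => h x) (funrposBneg k); rewrite !fctE -/(p x) => <-.
  by rewrite mulrBr; lra.
have b_ge0 x := ltW (b_gt0 x).
have mqposb : measurable_fun setT (fun x => q x * funrpos k x + b x).
  exact: measurable_funD.
have mqnegp : measurable_fun setT (fun x => q x * funrneg k x + p x).
  exact: measurable_funD.
rewrite integralB_ge0_fin.
- rewrite (ge0_integralD_EFin kl0 _ mkl mqposb) => [|x]; last exact: addr_ge0.
  by rewrite (ge0_integralD_EFin qpos b_ge0 mqpos mb) (ge0_integralD_EFin qneg p_ge0 mqneg mp).
- by move=> x; apply: addr_ge0 => //; exact: addr_ge0.
- by move=> x; exact: addr_ge0.
- exact: measurable_funD.
- exact: mqnegp.
- by rewrite (ge0_integralD_EFin qneg p_ge0 mqneg mp) intp lte_add_pinfty ?ltry.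
Qed.

Lemma integral_gen_kl_tilt q : (forall x, 0 <= q x) -> measurable_fun setT q ->
  (\int[mu]_x (q x * funrpos k x)%:E = \int[mu]_x (p x * funrpos k x)%:E)%E ->
  (\int[mu]_x (q x * funrneg k x)%:E = \int[mu]_x (p x * funrneg k x)%:E)%E ->
  (\int[mu]_x (gen_kl (q x) (b x))%:E =
   \int[mu]_x (gen_kl (q x) (p x))%:E + \int[mu]_x (gen_kl (p x) (b x))%:E)%E.
Proof.
move=> q_ge0 mq qpos qneg.
have negfin := le_lt_trans integral_tilt_negpart_le1 (ltry 1).
rewrite integral_gen_kl_tiltE//; last by rewrite qneg.
rewrite qpos qneg (integral_gen_kl_tiltE p_ge0 mp negfin).
have -> : (\int[mu]_x (gen_kl (p x) (p x))%:E = 0)%E.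
  by under eq_integral do rewrite gen_klxx; exact: integral0.
by rewrite add0e [in RHS]addeA.
Qed.

End tilt.
End integral_gen_kl.

Section integral_mulr_comp_cvg.
Context d d' (T : measurableType d) (U : measurableType d') (R : realType).
Variable mu : {measure set T -> \bar R}.
Import HBNNSimple.

Lemma integral_mulr_comp_cvg (w : T -> R) (phi : T -> U) (h : {nnsfun U >-> R}^nat)
    (f : U -> R) : (forall x, 0 <= w x) -> measurable_fun setT w ->
    measurable_fun setT phi -> (forall y, {homo h ^~ y : m n / (m <= n)%N >-> m <= n}) ->
    (forall y, (EFin \o h ^~ y) @ \oo --> (f y)%:E) ->
  (\int[mu]_x (w x * f (phi x))%:E =
   limn (fun n => \int[mu]_x (w x * h n (phi x))%:E))%E.
Proof.
move=> w0 mw mphi ndh cvh; rewrite -monotone_convergence//.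
- apply: eq_integral => x _; apply/esym/cvg_lim => //.
  rewrite EFinM; under eq_fun do rewrite EFinM.
  exact: cvgeZl (cvh (phi x)).
- by move=> n; apply/measurable_EFinP/measurable_funM => //; exact: measurableT_comp.
- by move=> n x _; rewrite lee_fin mulr_ge0.
- by move=> x _ m n mn; rewrite lee_fin ler_wpM2l ?ndh.
Qed.

End integral_mulr_comp_cvg.

Section pushforward_density.
Context d d' (T : measurableType d) (U : measurableType d') (R : realType).
Variables (mu : {measure set T -> \bar R}) (nu : {measure set U -> \bar R}).
Variables (g : T -> U) (q : T -> R) (p : U -> R).
Hypothesis mg : measurable_fun setT g.
Hypotheses (mq : measurable_fun setT q) (mp : measurable_fun setT p).
Hypotheses (q_ge0 : forall x, 0 <= q x) (p_ge0 : forall y, 0 <= p y).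
Hypothesis push : forall A, measurable A ->
  (\int[mu]_(x in g @^-1` A) (q x)%:E = \int[nu]_(y in A) (p y)%:E)%E.

Lemma pushforward_density_indic A : measurable A ->
  (\int[mu]_x (q x * \1_A (g x))%:E = \int[nu]_y (p y * \1_A y)%:E)%E.
Proof.
by move=> mA; rewrite [RHS]integral_mulr_indic -push// -integral_mulr_indic.
Qed.

Import HBNNSimple.

Lemma pushforward_density_nnsfun (h : {nnsfun U >-> R}) :
  (\int[mu]_x (q x * h (g x))%:E = \int[nu]_y (p y * h y)%:E)%E.
Proof.
have hI r y : 0 <= r * \1_(h @^-1` [set r]) y.
  by have := nnfun_muleindic_ge0 h r y; rewrite -EFinM lee_fin.
have mI r : measurable_fun setT (\1_(h @^-1` [set r]) : U -> R).
  exact/measurable_indic/measurable_funPTI.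
under eq_integral do rewrite fimfunE mulr_fsumr -fsumEFin//.
under [RHS]eq_integral do rewrite fimfunE mulr_fsumr -fsumEFin//.
rewrite ge0_integral_fsum//; last 2 first.
- move=> r; apply/measurable_EFinP; apply: measurable_funM => //.
  by apply: measurable_funM => //; exact: measurableT_comp.
- by move=> r x _; rewrite lee_fin mulr_ge0.
rewrite ge0_integral_fsum//; last 2 first.
- move=> r; apply/measurable_EFinP; apply: measurable_funM => //.
  exact: measurable_funM.
- by move=> r y _; rewrite lee_fin mulr_ge0.
apply: eq_fsbigr => r /[!inE] -[t _ <-].
under eq_integral do rewrite mulrCA EFinM.
under [RHS]eq_integral do rewrite mulrCA EFinM.
rewrite !ge0_integralZl_EFin//.
- by rewrite pushforward_density_indic//; exact: measurable_funPTI.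
- by move=> y _; rewrite lee_fin mulr_ge0.
- exact/measurable_EFinP/measurable_funM.
- by move=> x _; rewrite lee_fin mulr_ge0.
- by apply/measurable_EFinP/measurable_funM => //; exact: measurableT_comp.
Qed.

Lemma ge0_integral_pushforward_density (f : U -> R) :
    (forall y, 0 <= f y) -> measurable_fun setT f ->
  (\int[mu]_x (q x * f (g x))%:E = \int[nu]_y (p y * f y)%:E)%E.
Proof.
move=> f0 mf; have mF : measurable_fun setT (EFin \o f) by exact/measurable_EFinP.
pose h := nnsfun_approx measurableT mF.
have ndh y : {homo h ^~ y : m n / (m <= n)%N >-> m <= n}.
  by move=> m n mn; exact/lefP/nd_nnsfun_approx.
have cvh y : (EFin \o h ^~ y) @ \oo --> (f y)%:E.
  by apply: cvg_nnsfun_approx => // z _; rewrite lee_fin.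
rewrite (integral_mulr_comp_cvg mu q_ge0 mq mg ndh cvh).
rewrite (integral_mulr_comp_cvg nu p_ge0 mp (@measurable_id _ _ setT) ndh cvh).
by congr (lim (_ @ \oo)); apply/funext => n; exact: pushforward_density_nnsfun.
Qed.

End pushforward_density.

Section tilted_noise.
Context d d' (T : measurableType d) (U : measurableType d') (R : realType).
Variables (mu : {measure set T -> \bar R}) (nu : {measure set U -> \bar R}).
Variables (g : T -> U) (p0 : T -> R) (pbase : U -> R) (h : U -> R).
Hypotheses (mg : measurable_fun setT g) (mh : measurable_fun setT h).
Hypotheses (mp0 : measurable_fun setT p0) (p0_gt0 : forall x, 0 < p0 x).
Hypotheses (mpbase : measurable_fun setT pbase) (pbase_ge0 : forall y, 0 <= pbase y).
Hypothesis int_pbase : (\int[nu]_y (pbase y)%:E = 1)%E.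
Hypothesis push_p0 : forall A, measurable A ->
  (\int[mu]_(x in g @^-1` A) (p0 x)%:E = \int[nu]_(y in A) (pbase y)%:E)%E.
Hypothesis tilt_fin : (\int[mu]_x (p0 x * expR (h (g x)))%:E < +oo)%E.

Let Z := (\int[nu]_y (pbase y * expR (h y))%:E)%E.
Let pstar y := pbase y * expR (h y) / fine Z.
Let p0star x := p0 x * expR (h (g x)) / fine Z.

Let p0_ge0 x : 0 <= p0 x. Proof. exact: ltW. Qed.

Let mexph : measurable_fun setT (fun y => expR (h y)).
Proof. exact: measurableT_comp (@measurable_expR R) mh. Qed.

Let mtilt : measurable_fun setT (fun x => p0 x * expR (h (g x))).
Proof. exact: measurable_funM mp0 (measurableT_comp mexph mg). Qed.

Lemma int_noise_density : (\int[mu]_x (p0 x)%:E = 1)%E.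
Proof. by rewrite -int_pbase -push_p0// preimage_setT. Qed.

Lemma tilt_normalizerE : Z = (\int[mu]_x (p0 x * expR (h (g x)))%:E)%E.
Proof.
rewrite (ge0_integral_pushforward_density mg mp0 mpbase p0_ge0 pbase_ge0 push_p0
  (f := fun y => expR (h y))) // => y; exact: expR_ge0.
Qed.

Lemma tilt_normalizer_gt0 : 0 < fine Z.
Proof.
have tilt_gt0 x : 0 < p0 x * expR (h (g x)) by rewrite mulr_gt0 ?expR_gt0.
rewrite tilt_normalizerE fine_gt0// tilt_fin andbT lt0e integral_ge0 ?andbT; last first.
  by move=> x _; rewrite lee_fin ltW.
apply/eqP => /ge0_integral_eq0_ae ae0.
have : (\int[mu]_x (p0 x)%:E = \int[mu]_x (cst 0%E) x)%E.
  apply: ae_eq_integral => //; first exact/measurable_EFinP.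
  apply: filterS (ae0 (fun x => ltW (tilt_gt0 x)) mtilt) => x /eqP.
  by rewrite gt_eqF.
by rewrite int_noise_density integral0 => /eqP; rewrite onee_eq0.
Qed.

Let z_gt0 := tilt_normalizer_gt0.

Let ZE : Z = (fine Z)%:E.
Proof.
rewrite fineK// tilt_normalizerE ge0_fin_numE// integral_ge0// => x _.
by rewrite lee_fin mulr_ge0 ?expR_ge0.
Qed.

Lemma p0starE x : p0star x = p0 x * expR (h (g x) - ln (fine Z)).
Proof. by rewrite expRD expRN lnK ?posrE// mulrA. Qed.

Lemma p0star_gt0 x : 0 < p0star x.
Proof. by rewrite p0starE mulr_gt0 ?expR_gt0. Qed.

Let p0star_ge0 x : 0 <= p0star x. Proof. exact/ltW/p0star_gt0. Qed.

Lemma measurable_p0star : measurable_fun setT p0star.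
Proof. exact: measurable_funM mtilt (measurable_cst _). Qed.

Lemma measurable_pstar : measurable_fun setT pstar.
Proof. exact: measurable_funM (measurable_funM mpbase mexph) (measurable_cst _). Qed.

Lemma pstar_ge0 y : 0 <= pstar y.
Proof. by apply: divr_ge0; [exact: mulr_ge0 (pbase_ge0 y) (expR_ge0 _)|exact: ltW]. Qed.

Lemma int_p0star : (\int[mu]_x (p0star x)%:E = 1)%E.
Proof.
under eq_integral do rewrite /p0star mulrC EFinM.
rewrite ge0_integralZl_EFin //.
- by rewrite -tilt_normalizerE ZE -EFinM mulVf ?gt_eqF.
- by move=> x _; rewrite lee_fin mulr_ge0 ?expR_ge0 ?p0_ge0.
- exact: (measurable_EFinP _ _).2 mtilt.
- by rewrite invr_ge0 ltW.
Qed.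

Lemma pushforward_p0star A : measurable A ->
  (\int[mu]_(x in g @^-1` A) (p0star x)%:E = \int[nu]_(y in A) (pstar y)%:E)%E.
Proof.
move=> mA; rewrite -[LHS]integral_mulr_indic -[RHS]integral_mulr_indic.
pose F y := expR (h y) / fine Z * \1_A y.
have F_ge0 y : 0 <= F y.
  by rewrite mulr_ge0 ?indic_ge0// divr_ge0 ?expR_ge0// ltW.
have mF : measurable_fun setT F.
  apply: measurable_funM; last exact: measurable_indic.
  exact: measurable_funM mexph (measurable_cst _).
transitivity (\int[mu]_x (p0 x * F (g x))%:E)%E.
  by apply: eq_integral => x _; rewrite /F !mulrA.
rewrite (ge0_integral_pushforward_density mg mp0 mpbase p0_ge0 pbase_ge0 push_p0)//.
by apply: eq_integral => y _; rewrite /F !mulrA.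
Qed.

Section admissible.
Variable q : T -> R.
Hypotheses (q_ge0 : forall x, 0 <= q x) (mq : measurable_fun setT q).
Hypothesis push_q : forall A, measurable A ->
  (\int[mu]_(x in g @^-1` A) (q x)%:E = \int[nu]_(y in A) (pstar y)%:E)%E.

Lemma pushforward_comp_p0star (f : U -> R) : (forall y, 0 <= f y) -> measurable_fun setT f ->
  (\int[mu]_x (q x * f (g x))%:E = \int[mu]_x (p0star x * f (g x))%:E)%E.
Proof.
move=> f0 mf.
rewrite (ge0_integral_pushforward_density mg mq measurable_pstar q_ge0 pstar_ge0 push_q)//.
by rewrite (ge0_integral_pushforward_density mg measurable_p0star measurable_pstar
  p0star_ge0 pstar_ge0 pushforward_p0star).
Qed.

Hypothesis int_q : (\int[mu]_x (q x)%:E = 1)%E.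

Lemma integral_xlnx_tilted :
  (\int[mu]_x (q x * ln (q x / p0 x))%:E =
   \int[mu]_x (gen_kl (q x) (p0star x))%:E
     + \int[mu]_x (p0star x * ln (p0star x / p0 x))%:E)%E.
Proof.
have int_p0 := int_noise_density.
rewrite (integral_xlnx_gen_kl q_ge0 p0_gt0 mq mp0 int_q int_p0).
rewrite (integral_xlnx_gen_kl p0star_ge0 p0_gt0 measurable_p0star mp0 int_p0star int_p0).
pose k y := h y - ln (fine Z).
have mk : measurable_fun setT k by exact: measurable_funB.
have kpos := pushforward_comp_p0star (@funrpos_ge0 _ _ k) (measurable_funrpos mk).
have kneg := pushforward_comp_p0star (@funrneg_ge0 _ _ k) (measurable_funrneg mk).
have int_tilt := int_p0star.
have p0star_tilt : p0star = fun x => p0 x * expR (k (g x)).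
  by apply/funext => x; rewrite p0starE.
rewrite p0star_tilt in kpos kneg int_tilt *.
exact: (integral_gen_kl_tilt (k := k \o g) p0_gt0 mp0 (measurableT_comp mk mg) int_p0
  int_tilt q_ge0 mq kpos kneg).
Qed.

Lemma integral_xlnx_tilted_le :
  (\int[mu]_x (p0star x * ln (p0star x / p0 x))%:E <=
   \int[mu]_x (q x * ln (q x / p0 x))%:E)%E.
Proof.
rewrite integral_xlnx_tilted leeDr// integral_ge0// => x _.
by rewrite lee_fin gen_kl_ge0 ?p0star_gt0.
Qed.

Lemma integral_xlnx_tilted_eq :
  (\int[mu]_x (p0star x * ln (p0star x / p0 x))%:E < +oo)%E ->
  (\int[mu]_x (q x * ln (q x / p0 x))%:E =
   \int[mu]_x (p0star x * ln (p0star x / p0 x))%:E)%E ->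
  {ae mu, forall x, q x = p0star x}.
Proof.
set W := (\int[mu]_x (p0star x * ln (p0star x / p0 x))%:E)%E => Wlt.
have Wfin : W \is a fin_num.
  rewrite ge0_fin_numE// /W (integral_xlnx_gen_kl p0star_ge0 p0_gt0 measurable_p0star
    mp0 int_p0star int_noise_density).
  by apply: integral_ge0 => x _; rewrite lee_fin gen_kl_ge0.
rewrite integral_xlnx_tilted => /(congr1 (fun t => t - W)%E).
rewrite addeK// subee// => kl0.
exact: ae_eq_of_integral_gen_kl_eq0 q_ge0 p0star_gt0 mq measurable_p0star kl0.
Qed.

End admissible.

Lemma tilted_noise_optimal :
  let W := (\int[mu]_x (p0star x * ln (p0star x / p0 x))%:E)%E in
  let admissible (q : T -> R) := [/\ measurable_fun setT q, forall x, 0 <= q x,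
    (\int[mu]_x (q x)%:E = 1)%E & forall A, measurable A ->
    (\int[mu]_(x in g @^-1` A) (q x)%:E = \int[nu]_(y in A) (pstar y)%:E)%E] in
  [/\ Z = (\int[mu]_x (p0 x * expR (h (g x)))%:E)%E,
      admissible p0star /\ forall x, 0 < p0star x,
      forall q, admissible q -> (W <= \int[mu]_x (q x * ln (q x / p0 x))%:E)%E &
      (W < +oo)%E -> forall q, admissible q ->
        (\int[mu]_x (q x * ln (q x / p0 x))%:E)%E = W ->
        {ae mu, forall x, q x = p0star x}].
Proof.
move=> W admissible; split.
- exact: tilt_normalizerE.
- split; last exact: p0star_gt0.
  split; [exact: measurable_p0star|exact: p0star_ge0|exact: int_p0star|].
  exact: pushforward_p0star.
- by move=> q [mq q_ge0 int_q push_q]; exact: integral_xlnx_tilted_le.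
- by move=> fin q [mq q_ge0 int_q push_q]; exact: integral_xlnx_tilted_eq.
Qed.

End tilted_noise.

Lemma KLE (R : realType) (n : nat) (lam : {measure set (n.-tuple R) -> \bar R})
    (q p : n.-tuple R -> R) : (forall x, 0 < p x) ->
  KL lam q p = (\int[lam]_x (q x * ln (q x / p x))%:E)%E.
Proof.
move=> p_gt0; apply: eq_integral => x _; rewrite /kl_integrand leNgt p_gt0.
by case: eqP => [->|_]; rewrite ?mul0r.
Qed.

Lemma std_gauss_gt0 (R : realType) (n : nat) (x : n.-tuple R) : 0 < std_gauss x.
Proof.
rewrite mulr_gt0 ?expR_gt0// invr_gt0 exprn_gt0// sqrtr_gt0.
by rewrite mulr_gt0// pi_gt0.
Qed.

Lemma measurable_std_gauss (R : realType) (n : nat) :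
  measurable_fun setT (@std_gauss R n).
Proof.
apply: measurable_funM => //; apply: measurableT_comp => //.
apply: measurable_funM => //; apply: measurable_funN.
by apply: measurable_sum => i; apply: measurable_funX; exact: measurable_tnth.
Qed.

Theorem theorem2 (R : realType) (d : nat)
  (lam : {measure set (d.-tuple R) -> \bar R})
  (Hlam : is_lebesgue_measure lam)
  (g : d.-tuple R -> d.-tuple R) (mg : measurable_fun setT g)
  (r : d.-tuple R -> R) (mr : measurable_fun setT r)
  (alpha : R) (halpha : 0 < alpha)
  (hfin : (\int[lam]_x (std_gauss x * expR (r (g x) / alpha))%:E < +oo)%E)
  (pbase : d.-tuple R -> R) (hpbase : is_density lam pbase)
  (hpush : pushforward_has_density lam g (@std_gauss R d) pbase) :
  let Zstar := (\int[lam]_x (pbase x * expR (r x / alpha))%:E)%E in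
  let pstar := fun x => pbase x * expR (r x / alpha) / fine Zstar in
  let p0star := fun x0 => std_gauss x0 * expR (r (g x0) / alpha) / fine Zstar in
  [/\ (Zstar = \int[lam]_x0 (std_gauss x0 * expR (r (g x0) / alpha))%:E)%E,
      (* (1) *)
      is_density lam p0star /\ pushforward_has_density lam g p0star pstar,
      (* (2) p0star minimizes KL(. || p0) over the admissible noise densities *)
      (forall q0, is_density lam q0 -> pushforward_has_density lam g q0 pstar ->
         (KL lam p0star (@std_gauss R d) <= KL lam q0 (@std_gauss R d))%E) &
      (* (2) uniqueness (a.e.), when the minimum value is finite *)
      (KL lam p0star (@std_gauss R d) < +oo)%E ->
      forall q0, is_density lam q0 -> pushforward_has_density lam g q0 pstar ->
         KL lam q0 (@std_gauss R d) = KL lam p0star (@std_gauss R d) ->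
         {ae lam, forall x, q0 x = p0star x}].
Proof.
move=> Zstar pstar p0star.
have [mpbase pbase_ge0 int_pbase] := hpbase.
have mh : measurable_fun setT (fun y => r y / alpha).
  exact: measurable_funM mr (measurable_cst _).
have p0_gt0 := @std_gauss_gt0 R d; have mp0 := @measurable_std_gauss R d.
have [Z_eq p0star_adm le_p0star eq_p0star] :=
  tilted_noise_optimal mg mh mp0 p0_gt0 mpbase pbase_ge0 int_pbase hpush hfin.
split.
- exact: Z_eq.
- by case: p0star_adm => -[].
- move=> q [mq q_ge0 int_q] push_q; rewrite !KLE//.
  exact: le_p0star.
- move=> fin q [mq q_ge0 int_q] push_q; rewrite !KLE// in fin *.
  exact: eq_p0star.
Qed.
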